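(* Let $q \in \mathbb{R}^d$ and let $\mathcal{Q} = \lbrace i : q[i] \neq 0 \rbrace \subset \lbrace 1,\ldots,d\rbrace$. Let $\lbrace z_1,\ldots,z_m\rbrace \subset \mathbb{R}^d$ be a set of orthonormal vectors, and let $\mathcal{Z}_j = \lbrace i : z_j[i] \neq 0 \rbrace$ for $j = 1,\ldots,m$. Let $u$ be the output of twice-iterated classical Gram-Schmidt applied to $q$ over $\lbrace z_1,\ldots,z_m\rbrace$, i.e. $t_0 = q$, $t_{j+1} = t_j - \sum_{l=1}^m (t_j' z_l) z_l$ for $j = 0,1$, and $u = t_2$ (in exact arithmetic). Then $$\mathcal{U} := \lbrace i : u[i] \neq 0\rbrace \subset \Big(\bigcup_{j \in \mathfrak{Q}} \mathcal{Z}_j\Big) \cup \mathcal{Q}, \qquad \text{where } \mathfrak{Q} = \lbrace j : \mathcal{Q} \cap \mathcal{Z}_j \neq \emptyset \rbrace \subset \lbrace 1,\ldots,m\rbrace.$$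
   Context: For a vector $z \in \mathbb{R}^d$, $z[i]$ denotes its $i$-th component; $'$ denotes transpose. *)

(* Vectors in R^d are row vectors 'rV[R]_d; components are
   indexed by 'I_d (0-based, i.e. {1..d} shifted). *)
From mathcomp Require Import all_boot all_order all_algebra.
Set Implicit Arguments. Unset Strict Implicit. Unset Printing Implicit Defensive.
Import Order.TTheory GRing.Theory Num.Theory.
Local Open Scope ring_scope.

Definition dotv (R : realFieldType) (d : nat) (u v : 'rV[R]_d) : R :=
  \sum_(i < d) u 0 i * v 0 i.

Definition orthonormal_fam (R : realFieldType) (d m : nat) (z : 'I_m -> 'rV[R]_d) : Prop :=
  forall j l : 'I_m, dotv (z j) (z l) = (j == l)%:R.

Definition cgs_step (R : realFieldType) (d m : nat) (z : 'I_m -> 'rV[R]_d)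
  (t : 'rV[R]_d) : 'rV[R]_d :=
  t - \sum_(l < m) dotv t (z l) *: z l.

Definition cgs2 (R : realFieldType) (d m : nat) (z : 'I_m -> 'rV[R]_d)
  (q : 'rV[R]_d) : 'rV[R]_d :=
  cgs_step z (cgs_step z q).

Definition supp (R : realFieldType) (d : nat) (v : 'rV[R]_d) : {set 'I_d} :=
  [set i | v 0 i != 0].

(* The second sweep of classical Gram-Schmidt is the identity in exact
   arithmetic, because the first sweep already makes the vector orthogonal to
   every z_l.  Hence u = q - sum_l (q' z_l) z_l, and a term of the sum
   contributes only when q' z_l <> 0, which forces supp q and supp z_l to
   meet. *)
From mathcomp Require Import all_boot all_order all_algebra.
Import Order.TTheory GRing.Theory Num.Theory.
Local Open Scope ring_scope.

Section InnerProduct.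

Context {R : realFieldType} {d : nat}.
Implicit Types u v w : 'rV[R]_d.

Lemma dotvBl u v w : dotv (u - v) w = dotv u w - dotv v w.
Proof. by rewrite /dotv -sumrB; apply: eq_bigr => i _; rewrite !mxE mulrBl. Qed.

Lemma dotv_suml {I : finType} (c : I -> R) (z : I -> 'rV[R]_d) w :
  dotv (\sum_l c l *: z l) w = \sum_l c l * dotv (z l) w.
Proof.
under [RHS]eq_bigr do rewrite /dotv mulr_sumr.
rewrite /dotv exchange_big /=; apply: eq_bigr => i _.
rewrite summxE mulr_suml; apply: eq_bigr => l _.
by rewrite mxE mulrA.
Qed.

Lemma dotv_neq0_supp u v : dotv u v != 0 -> supp u :&: supp v != set0.
Proof.
move=> uv_neq0; apply/set0Pn.
have [k] : exists k, u 0 k * v 0 k != 0.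
  apply/existsP; apply: contraNT uv_neq0 => /existsPn uv0.
  by rewrite /dotv big1 // => k _; apply/eqP/negbNE/uv0.
rewrite mulf_eq0 negb_or => /andP[uk_neq0 vk_neq0].
by exists k; rewrite !inE uk_neq0 vk_neq0.
Qed.

Lemma suppB_sub u v : supp (u - v) \subset supp u :|: supp v.
Proof.
apply/subsetP => i; rewrite !inE !mxE.
by apply: contraR; rewrite negb_or !negbK => /andP[/eqP-> /eqP->]; rewrite subrr.
Qed.

Lemma supp_lincomb_sub {I : finType} (c : I -> R) (z : I -> 'rV[R]_d) :
  supp (\sum_l c l *: z l) \subset \bigcup_(l | c l != 0) supp (z l).
Proof.
apply/subsetP => i; rewrite inE summxE; apply: contraR => i_out.
apply/eqP/big1 => l _; rewrite mxE.
have [-> | cl_neq0] := eqVneq (c l) 0; first by rewrite mul0r.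
suff -> : z l 0 i = 0 by rewrite mulr0.
by apply/eqP; apply: contraNT i_out => zli_neq0; apply/bigcupP; exists l; rewrite ?inE.
Qed.

End InnerProduct.

Section GramSchmidt.

Variables (R : realFieldType) (d m : nat) (z : 'I_m -> 'rV[R]_d).
Hypothesis z_orthonormal : orthonormal_fam z.

Lemma dotv_cgs_step t l : dotv (cgs_step z t) (z l) = 0.
Proof.
rewrite /cgs_step dotvBl dotv_suml (bigD1 l) //= z_orthonormal eqxx mulr1.
rewrite big1 ?addr0 ?subrr // => k k_neq_l.
by rewrite z_orthonormal (negbTE k_neq_l) mulr0.
Qed.

Lemma cgs2_cgs_step q : cgs2 z q = cgs_step z q.
Proof.
rewrite /cgs2 {1}/cgs_step big1 ?subr0 // => l _.
by rewrite dotv_cgs_step scale0r.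
Qed.

End GramSchmidt.

Theorem mainTheorem1 (R : realFieldType) (d m : nat)
  (q : 'rV[R]_d) (z : 'I_m -> 'rV[R]_d) :
  orthonormal_fam z ->
  supp (cgs2 z q) \subset
    (\bigcup_(j < m | supp q :&: supp (z j) != set0) supp (z j)) :|: supp q.
Proof.
move=> z_orthonormal; rewrite cgs2_cgs_step // /cgs_step setUC.
apply: subset_trans (suppB_sub _ _) (setUS _ _).
apply: subset_trans (supp_lincomb_sub _ _) _.
apply/bigcupsP => l /dotv_neq0_supp meet_l.
exact: bigcup_sup.
Qed.
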